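(* Let $X$ be a topological space and $\{X_\alpha\}_{\alpha\in I}$ a family of open subspaces of $X$, each of which is dense-connected. If $X_\alpha\cap X_\beta\neq\emptyset$ for any two distinct $\alpha,\beta\in I$, then $\bigcup_{\alpha\in I}X_\alpha$ is dense-connected.
   Context: A space $X$ is dense-connected if every dense subset of $X$ (with the subspace topology) is connected. *)

From HB Require Import structures.
From mathcomp Require Import all_boot all_order all_algebra.
From mathcomp Require Import all_classical topology.
Set Implicit Arguments. Unset Strict Implicit. Unset Printing Implicit Defensive.
Local Open Scope classical_set_scope.

(* D is dense in the subspace Y of X: D is contained in Y and every
   nonempty relatively open subset of Y (i.e. O `&` Y with O open in X)
   meets D. *)
Definition dense_in (T : topologicalType) (Y D : set T) : Prop :=
  D `<=` Y /\
  forall O : set T, open O -> O `&` Y !=set0 -> O `&` D !=set0.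

(* The subspace Y is dense-connected: every dense subset of Y is connected
   (mathcomp's [connected] is connectedness in the subspace topology). *)
Definition dense_connected (T : topologicalType) (Y : set T) : Prop :=
  forall D : set T, dense_in Y D -> connected D.

From mathcomp Require Import all_boot all_order all_algebra.
From mathcomp Require Import all_classical topology.
Local Open Scope classical_set_scope.

(* Let D be dense in U := \bigcup_a X a.  Since each X a is open,
   D `&` X a is dense in X a, hence connected because X a is dense-connected.
   D is the union of the pieces D `&` X a.  Fix a point x of D (the empty set
   is connected) and an index a0 with x in X a0.  Every piece D `&` X b meets
   the piece D `&` X a0: for b = a0 at x, and otherwise because the nonempty
   open set X a0 `&` X b lies in U and therefore meets the dense set D.  A
   union of connected sets all meeting a fixed connected member is connected. *)

Section Density.
Context {T : topologicalType}.

Lemma dense_in_meets_open {Y D V : set T} :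
  dense_in Y D -> open V -> V `<=` Y -> V !=set0 -> V `&` D !=set0.
Proof.
move=> [_ denseD] oV VY [x Vx].
by apply: denseD => //; exists x; split; [|exact: VY].
Qed.

Lemma dense_in_restrict_open {Y D V : set T} :
  dense_in Y D -> open V -> V `<=` Y -> dense_in V (D `&` V).
Proof.
move=> denseD oV VY; split; first by move=> x [].
move=> O oO [x [Ox Vx]].
have OVY : O `&` V `<=` Y by move=> z [_ Vz]; exact: VY.
have [y [[Oy Vy] Dy]] :=
  dense_in_meets_open denseD (openI oO oV) OVY (ex_intro _ x (conj Ox Vx)).
by exists y.
Qed.

End Density.

Lemma connected_star (T : topologicalType) (I : Type) (C : I -> set T) (a0 : I) :
  (forall b, connected (C b)) -> (forall b, C a0 `&` C b !=set0) ->
  connected (\bigcup_(b in [set: I]) C b).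
Proof.
move=> connC meetC.
have -> : \bigcup_(b in [set: I]) C b
          = \bigcup_(b in [set: I]) (C a0 `|` C b).
  apply/seteqP; split; first by move=> y [b _ Cy]; exists b => //; right.
  by move=> y [b _ [Cy|Cy]]; [exists a0|exists b].
have [x C0x] : C a0 !=set0 by have [x [C0x _]] := meetC a0; exists x.
apply: bigcup_connected; first by exists x => b _; left.
by move=> b _; apply: connectedU.
Qed.

Theorem proposition4p13 (T : topologicalType) (I : Type) (X : I -> set T) :
  (forall a, open (X a)) ->
  (forall a, dense_connected (X a)) ->
  (forall a b, a <> b -> X a `&` X b !=set0) ->
  dense_connected (\bigcup_(a in [set: I]) X a).
Proof.
move=> oX dcX meetX D denseD.
have XU b : X b `<=` \bigcup_(a in [set: I]) X a by move=> y Xy; exists b.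
have [->|/set0P [x Dx]] := eqVneq D set0; first exact: connected0.
have [a0 _ X0x] := denseD.1 x Dx.
have -> : D = \bigcup_(b in [set: I]) (D `&` X b).
  apply/seteqP; split; last by move=> y [b _ []].
  by move=> y Dy; have [b _ Xy] := denseD.1 y Dy; exists b.
apply: (@connected_star T I (fun b => D `&` X b) a0).
- by move=> b; apply: dcX; exact: (dense_in_restrict_open denseD (oX b) (XU b)).
- move=> b; have [<-|a0b] := pselect (a0 = b); first by exists x.
  have X0bU : X a0 `&` X b `<=` \bigcup_(a in [set: I]) X a.
    by move=> y [X0y _]; exact: (XU a0 y X0y).
  have [y [[X0y Xby] Dy]] :=
    dense_in_meets_open denseD (openI (oX a0) (oX b)) X0bU (meetX _ _ a0b).
  by exists y.
Qed.
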